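(* Let $G$ be a finite loopless graph (parallel edges allowed). The set $\mathrm{Short}(\mathcal{C}(G))$ consists of precisely the orientation covectors for $\mathcal{C}(G)$.
   Context: Fix a reference orientation $\mathcal{O}_0$ of $G=(V,E)$; $C_1(G;\mathbb{Z})$ is the free abelian group on $E$ (edges directed by $\mathcal{O}_0$), $E$ orthonormal; $\partial e=v-w$ for $e$ from $w$ to $v$, $\partial^*$ its adjoint; the cut lattice is $\mathcal{C}(G)=\mathrm{im}(\partial^* )\cap C_1(G;\mathbb{Z})$ (over $\mathbb{Q}$). For an orientation $\mathcal{O}$ of $G$, $\chi_{\mathcal{O}}\in C_1(G;\mathbb{Z})$ has $\langle\chi_{\mathcal{O}},e\rangle=1$ if $e$ has the same direction in $\mathcal{O}_0$ and $\mathcal{O}$, and $-1$ otherwise; its restriction to $\mathcal{C}(G)$, an element of $\mathcal{C}(G)^*$, is called an orientation covector. For an integral positive definite lattice $\Lambda$, $\Lambda^*=\{x\in\Lambda\otimes\mathbb{Q}:\langle x,y\rangle\in\mathbb{Z}\ \forall y\}$, $\mathrm{Char}(\Lambda)=\{\chi\in\Lambda^*:\langle\chi,y\rangle\equiv\langle y,y\rangle\pmod2\ \forall y\in\Lambda\}$, and $\mathrm{Short}(\Lambda)$ is the set of $\chi\in\mathrm{Char}(\Lambda)$ of minimal norm in $\chi+2\Lambda$. *)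

From HB Require Import structures.
From mathcomp Require Import all_boot all_order all_algebra.
Set Implicit Arguments. Unset Strict Implicit. Unset Printing Implicit Defensive.
Import Order.TTheory GRing.Theory Num.Theory.
Local Open Scope ring_scope.

(* A finite loopless multigraph with a reference orientation O_0:
   vertex type V, edge type E (both finite), each edge e is directed by O_0
   from [src e] to [tgt e]; loopless means src e != tgt e.
   Chains C_1(G;Q) are functions E -> rat, with E orthonormal. *)

Section CutLattice.
Variables (V E : finType) (src tgt : E -> V).

Definition dot (x y : E -> rat) : rat := \sum_(e : E) x e * y e.

Definition integral_chain (x : E -> rat) : Prop := forall e, x e \is a Num.int.

(* adjoint d^* of the boundary map (d e = tgt e - src e): d^* f (e) = f(tgt e) - f(src e) *)
Definition cobdry (f : V -> rat) : E -> rat := fun e => f (tgt e) - f (src e).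

Definition cut_lattice (x : E -> rat) : Prop :=
  integral_chain x /\ exists f : V -> rat, forall e, x e = cobdry f e.

End CutLattice.

Section Lattices.
Variable E : finType.
Implicit Types (L : (E -> rat) -> Prop) (x y : E -> rat).

(* L (x) Q, realised as the Q-span of L inside Q^E *)
Definition latQ L x : Prop :=
  exists (n : nat) (c : 'I_n -> rat) (y : 'I_n -> E -> rat),
    (forall i, L (y i)) /\ forall e, x e = \sum_(i < n) c i * y i e.

Definition lat_dual L x : Prop :=
  latQ L x /\ forall y, L y -> dot x y \is a Num.int.

Definition Char L x : Prop :=
  lat_dual L x /\
  forall y, L y -> exists k : int, dot x y - dot y y = 2 * k%:~R.

Definition Short L x : Prop :=
  Char L x /\
  forall y, L y -> dot x x <= dot (fun e => x e + 2 * y e) (fun e => x e + 2 * y e).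

(* an orientation O is encoded by o : E -> bool, o e = true iff e has the
   same direction in O and in O_0; chi_O is the associated +-1 chain *)
Definition chiO (o : E -> bool) : E -> rat := fun e => if o e then 1 else -1.

End Lattices.

From HB Require Import structures.
From mathcomp Require Import all_boot all_order all_algebra.
From mathcomp Require Import ring lra zify.
Import Order.TTheory GRing.Theory Num.Theory.
Local Open Scope ring_scope.
Set Implicit Arguments. Unset Strict Implicit.

(* For x in the cut lattice, testing minimality in x + 2C(G) against the cut
   vectors y_S of vertex sets S shows that d := div x (in minus out) satisfies
   g(S) := sum_(v in S) d v + #cut(S) >= 0; the characteristic condition makes
   every g(S) even, and sum_v d v = 0.  For the divergence of an orientation,
   g(S) is twice the number of edges entering S; conversely (Hakimi) these
   conditions force d to be the divergence of an orientation O, and then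
   <x, y> = <chi_O, y> on C(G) = im(d^* ).  Hakimi's theorem follows by
   orienting edges one at a time: an edge e can be oriented one way or the
   other unless two sets A, B with g(A) = g(B) = 0 are entered by e in
   opposite directions, which contradicts the submodularity
   g(A & B) + g(A | B) + 2 <= g(A) + g(B).
   Conversely, chi_O is characteristic and short because c y - y^2 is even
   and c y + y^2 >= 0 for c = +-1 and y integral. *)

Definition sign_of (b : bool) : rat := if b then 1 else -1.

Section Hakimi.
Variables (V E : finType) (src tgt : E -> V).

Definition incidence (e : E) (v : V) : rat := (tgt e == v)%:R - (src e == v)%:R.

Definition divergence (F : {set E}) (c : E -> rat) (v : V) : rat :=
  \sum_(e in F) incidence e v * c e.

Definition crosses (S : {set V}) (e : E) : bool := (tgt e \in S) != (src e \in S).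

Definition cut_size (F : {set E}) (S : {set V}) : rat := \sum_(e in F) (crosses S e)%:R.

Definition excess (F : {set E}) (d : V -> rat) (S : {set V}) : rat :=
  \sum_(v in S) d v + cut_size F S.

Definition orient_demand (d : V -> rat) (e : E) (b : bool) (v : V) : rat :=
  d v - incidence e v * sign_of b.

Definition enters (S : {set V}) (e : E) (b : bool) : bool :=
  if b then (tgt e \in S) && (src e \notin S) else (src e \in S) && (tgt e \notin S).

Lemma sum_setT (I : finType) (F : I -> rat) : \sum_(i in [set: I]) F i = \sum_i F i.
Proof. by apply: eq_bigl => i; rewrite in_setT. Qed.

Lemma sum_in (S : {set V}) (d : V -> rat) :
  \sum_(v in S) d v = \sum_v (v \in S)%:R * d v.
Proof.
rewrite big_mkcond; apply: eq_bigr => v _.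
by case: (v \in S); rewrite ?mul1r ?mul0r.
Qed.

Lemma sum_mul_eq (f : V -> rat) (w : V) : \sum_v f v * (w == v)%:R = f w.
Proof.
rewrite (bigD1 w) //= eqxx mulr1 big1 ?addr0 // => v /negbTE.
by rewrite eq_sym => ->; rewrite mulr0.
Qed.

Lemma sum_eq_indicator (S : {set V}) (w : V) :
  \sum_(v in S) ((w == v)%:R : rat) = (w \in S)%:R.
Proof. by rewrite sum_in sum_mul_eq. Qed.

Lemma sum_incidence (S : {set V}) (e : E) :
  \sum_(v in S) incidence e v = (tgt e \in S)%:R - (src e \in S)%:R.
Proof. by rewrite /incidence sumrB !sum_eq_indicator. Qed.

Lemma sum_divergence (F : {set E}) (c : E -> rat) : \sum_v divergence F c v = 0.
Proof.
rewrite /divergence exchange_big big1 //= => e _.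
by rewrite -mulr_suml -sum_setT sum_incidence !in_setT subrr mul0r.
Qed.

Lemma excess_orient_demand (F : {set E}) (d : V -> rat) (e : E) (b : bool) (S : {set V}) :
  e \in F ->
  excess (F :\ e) (orient_demand d e b) S =
  excess F d S - 2 * (enters S e b)%:R.
Proof.
move=> eF; rewrite /excess /cut_size /orient_demand (big_setD1 _ eF) sumrB -mulr_suml.
rewrite sum_incidence /crosses /enters /sign_of.
by case: b; case: (tgt e \in S); case: (src e \in S) => /=; ring.
Qed.

Lemma crosses_submod (A B : {set V}) (f : E) :
  (crosses (A :&: B) f + crosses (A :|: B) f <= crosses A f + crosses B f)%N.
Proof.
rewrite /crosses !in_setI !in_setU.
by case: (tgt f \in A); case: (tgt f \in B); case: (src f \in A); case: (src f \in B).
Qed.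

Lemma excess_submod (F : {set E}) (d : V -> rat) (e : E) (A B : {set V}) :
  e \in F -> enters A e true -> enters B e false ->
  excess F d (A :&: B) + excess F d (A :|: B) + 2 <= excess F d A + excess F d B.
Proof.
move=> eF /andP[tA sA] /andP[sB tB].
have sum_modular : \sum_(v in A :&: B) d v + \sum_(v in A :|: B) d v
                 = \sum_(v in A) d v + \sum_(v in B) d v.
  rewrite !sum_in -!big_split /=; apply: eq_bigr => v _.
  by rewrite in_setI in_setU; case: (v \in A); case: (v \in B) => /=; ring.
have cut_rest : \sum_(f in F :\ e) (crosses (A :&: B) f)%:R
              + \sum_(f in F :\ e) (crosses (A :|: B) f)%:R
             <= \sum_(f in F :\ e) (crosses A f)%:R
              + \sum_(f in F :\ e) ((crosses B f)%:R : rat).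
  by rewrite -!big_split /=; apply: ler_sum => f _; rewrite -!natrD ler_nat crosses_submod.
have cut_e : [/\ crosses (A :&: B) e = false, crosses (A :|: B) e = false,
                 crosses A e & crosses B e].
  by rewrite /crosses !in_setI !in_setU tA sB (negbTE sA) (negbTE tB) orbT.
move: cut_e cut_rest; rewrite /excess /cut_size !(big_setD1 _ eF).
case=> -> -> -> -> /=; lra.
Qed.

Lemma even_ge0_lt2 (r : rat) : 0 <= r -> (exists k : int, r = 2 * k%:~R) -> r < 2 -> r = 0.
Proof.
move=> r0 [k rk] r2; subst r.
have k_ge0 : 0 <= k by rewrite -(ler0z rat); lra.
have k_lt1 : k < 1 by rewrite -(ltrz1 rat); lra.
have -> : k = 0 by lia.
by rewrite mulr0.
Qed.

Lemma orient_edge_feasible (F : {set E}) (d : V -> rat) (e : E) : e \in F ->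
  (forall S, 0 <= excess F d S) ->
  (forall S, exists k : int, excess F d S = 2 * k%:~R) ->
  exists b, forall S, 0 <= excess (F :\ e) (orient_demand d e b) S.
Proof.
move=> eF ge0 even.
have tight b S : excess (F :\ e) (orient_demand d e b) S < 0 ->
    enters S e b /\ excess F d S = 0.
  rewrite excess_orient_demand //; case: (enters S e b) => /=; first split => //.
    by apply: even_ge0_lt2; rewrite ?ge0 ?even //; lra.
  by have := ge0 S; lra.
have [ok_true|] := boolP [forall S, 0 <= excess (F :\ e) (orient_demand d e true) S].
  by exists true => S; move/forallP: ok_true.
move/forallPn=> [A]; rewrite -ltNge => /tight[eA A0].
have [ok_false|] := boolP [forall S, 0 <= excess (F :\ e) (orient_demand d e false) S].
  by exists false => S; move/forallP: ok_false.
move/forallPn=> [B]; rewrite -ltNge => /tight[eB B0].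
have := excess_submod d eF eA eB; have := ge0 (A :&: B); have := ge0 (A :|: B); lra.
Qed.

Theorem hakimi_orientation (F : {set E}) (d : V -> rat) :
  (forall S, 0 <= excess F d S) ->
  (forall S, exists k : int, excess F d S = 2 * k%:~R) ->
  \sum_v d v = 0 ->
  exists o : E -> bool, forall v, d v = divergence F (chiO o) v.
Proof.
have [n] := ubnP #|F|; elim: n F d => // n IH F d Fn ge0 even sum0.
have [F0 | [e eF]] := set_0Vmem F.
  exists (fun _ => true) => v; rewrite /divergence F0 big_set0.
  have d_ge0 u : 0 <= d u.
    by have := ge0 [set u]; rewrite /excess big_set1 /cut_size F0 big_set0 addr0.
  exact: (psumr_eq0P (fun u _ => d_ge0 u) sum0).
have [b ge0'] := orient_edge_feasible eF ge0 even.
have even' S : exists k : int,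
    excess (F :\ e) (orient_demand d e b) S = 2 * k%:~R.
  have [k ek] := even S; rewrite excess_orient_demand // ek.
  by exists (k - (enters S e b)%:R); rewrite intrB; ring.
have sum0' : \sum_v orient_demand d e b v = 0.
  by rewrite /orient_demand sumrB sum0 -mulr_suml -sum_setT sum_incidence !in_setT subrr mul0r subrr.
have F'n : (#|F :\ e| < n)%N by move: Fn; rewrite (cardsD1 e F) eF.
have [o Ho] := IH _ _ F'n ge0' even' sum0'.
exists (fun f => if f == e then b else o f) => v.
rewrite /divergence (big_setD1 _ eF) /chiO eqxx.
under eq_bigr => f /setD1P[/negbTE -> _] do [].
by have := Ho v; rewrite /divergence /orient_demand /sign_of => <- /=; rewrite addrC subrK.
Qed.

End Hakimi.

Section IntegralChains.
Variable E : finType.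

Lemma dot_add2_self (x y : E -> rat) :
  dot (fun e => x e + 2 * y e) (fun e => x e + 2 * y e) =
  dot x x + 4 * (dot x y + dot y y).
Proof.
rewrite /dot -big_split /= mulr_sumr -big_split /=; apply: eq_bigr => e _; ring.
Qed.

Lemma sign_mul_sub_sqr_even (b : bool) (y : rat) : y \is a Num.int ->
  exists k : int, sign_of b * y - y * y = 2 * k%:~R.
Proof.
move=> /intrP[n ->].
have [m [-> | ->]] : exists m, n = 2 * m \/ n = 2 * m + 1 by exists (n %/ 2)%Z; lia.
- case: b; [exists (m - 2 * m * m) | exists (- m - 2 * m * m)];
    by rewrite !(intrD, intrM, intrB, intrN) /sign_of; ring.
- case: b; [exists (- (2 * m + 1) * m) | exists (- (2 * m + 1) * (m + 1))];
    by rewrite !(intrD, intrM, intrB, intrN) /sign_of; ring.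
Qed.

Lemma sign_mul_add_sqr_ge0 (b : bool) (y : rat) : y \is a Num.int -> 0 <= sign_of b * y + y * y.
Proof.
move=> /intrP[n ->]; case: b.
  have : (0 <= n * (n + 1))%R by nia.
  by rewrite -(ler0z rat) intrM intrD /sign_of; lra.
have : (0 <= n * (n - 1))%R by nia.
by rewrite -(ler0z rat) intrM intrB /sign_of; lra.
Qed.

Lemma dot_chiO_sub_self_even (o : E -> bool) (y : E -> rat) : integral_chain y ->
  exists k : int, dot (chiO o) y - dot y y = 2 * k%:~R.
Proof.
move=> yZ; rewrite /dot -sumrB.
apply: (big_ind (fun z => exists k : int, z = 2 * k%:~R)).
- by exists 0; rewrite mulr0.
- by move=> a c [ka ->] [kc ->]; exists (ka + kc); rewrite intrD; ring.
- by move=> e _; apply: sign_mul_sub_sqr_even.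
Qed.

Lemma dot_chiO_add_self_ge0 (o : E -> bool) (y : E -> rat) : integral_chain y ->
  0 <= dot (chiO o) y + dot y y.
Proof.
by move=> yZ; rewrite /dot -big_split /=; apply: sumr_ge0 => e _; apply: sign_mul_add_sqr_ge0.
Qed.

Lemma orientation_Short (L : (E -> rat) -> Prop) (x : E -> rat) (o : E -> bool) :
  (forall y, L y -> integral_chain y) -> latQ L x ->
  (forall y, L y -> dot x y = dot (chiO o) y) -> Short L x.
Proof.
move=> LZ xQ xo.
have xZ y : L y -> dot x y \is a Num.int.
  move=> Ly; rewrite xo //; apply: rpred_sum => e _.
  by apply: rpredM; [rewrite /chiO; case: (o e); rewrite ?rpredN | exact: LZ].
split; first split; first by split.
- by move=> y Ly; rewrite xo //; apply: dot_chiO_sub_self_even; apply: LZ.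
- move=> y Ly; rewrite dot_add2_self (xo y Ly).
  by have := dot_chiO_add_self_ge0 o (LZ _ Ly); lra.
Qed.

End IntegralChains.

Section CutLattice.
Variables (V E : finType) (src tgt : E -> V).

Definition cut_vector (S : {set V}) : E -> rat :=
  cobdry src tgt (fun v => (v \in S)%:R).

Lemma dot_cobdry (x : E -> rat) (f : V -> rat) :
  dot x (cobdry src tgt f) = \sum_v f v * divergence src tgt [set: E] x v.
Proof.
rewrite /dot /divergence.
under [RHS]eq_bigr do rewrite mulr_sumr.
rewrite [RHS]exchange_big /= sum_setT; apply: eq_bigr => e _.
transitivity ((\sum_v f v * incidence src tgt e v) * x e); last first.
  by rewrite mulr_suml; apply: eq_bigr => v _; ring.
rewrite /incidence; under eq_bigr do rewrite mulrBr.
by rewrite sumrB !sum_mul_eq /cobdry mulrC.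
Qed.

Lemma cut_vector_in_cut_lattice (S : {set V}) : cut_lattice src tgt (cut_vector S).
Proof.
split; last by exists (fun v => (v \in S)%:R).
by move=> e; rewrite /cut_vector /cobdry rpredB // natr_int.
Qed.

Lemma excess_divergence (x : E -> rat) (S : {set V}) :
  excess src tgt [set: E] (divergence src tgt [set: E] x) S =
  dot x (cut_vector S) + dot (cut_vector S) (cut_vector S).
Proof.
rewrite /cut_vector dot_cobdry -sum_in; congr (_ + _).
rewrite /cut_size sum_setT /dot; apply: eq_bigr => e _.
by rewrite /cobdry /crosses; case: (tgt e \in S); case: (src e \in S) => /=; ring.
Qed.

Lemma Short_cut_lattice_orientation (x : E -> rat) :
  Short (cut_lattice src tgt) x ->
  exists o : E -> bool, forall y, cut_lattice src tgt y -> dot x y = dot (chiO o) y.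
Proof.
move=> [[_ char] short].
set d := divergence src tgt [set: E] x.
have ge0 S : 0 <= excess src tgt [set: E] d S.
  have := short _ (cut_vector_in_cut_lattice S).
  by rewrite dot_add2_self excess_divergence; lra.
have even S : exists k : int, excess src tgt [set: E] d S = 2 * k%:~R.
  have [yZ _] := cut_vector_in_cut_lattice S.
  have [k Hk] := char _ (cut_vector_in_cut_lattice S).
  have /intrP[j Hj] : dot (cut_vector S) (cut_vector S) \is a Num.int.
    by apply: rpred_sum => e _; apply: rpredM.
  by exists (k + j); rewrite excess_divergence intrD; lra.
have [o Ho] := hakimi_orientation ge0 even (sum_divergence src tgt _ x).
exists o => y [_ [f yf]].
have dot_y z : dot z y = dot z (cobdry src tgt f) by apply: eq_bigr => e _; rewrite yf.
by rewrite !dot_y !dot_cobdry -/d; apply: eq_bigr => v _; rewrite Ho.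
Qed.

End CutLattice.

Unset Implicit Arguments.

Theorem proposition3p3 (V E : finType) (src tgt : E -> V)
  (loopless : forall e : E, src e != tgt e) (x : E -> rat) :
  Short (cut_lattice src tgt) x <->
  (latQ (cut_lattice src tgt) x /\
   exists o : E -> bool,
     forall y, cut_lattice src tgt y -> dot x y = dot (chiO o) y).
Proof.
split.
- move=> xS; split; first by case: xS => [[[]]].
  exact: Short_cut_lattice_orientation.
- move=> [xQ [o xo]]; apply: (orientation_Short _ xQ xo).
  by move=> y [].
Qed.
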